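(* Let $m'$ be an integer with $m'\not\equiv3,6\pmod9$. Then there exist integers $x_1,x_2,x_3,x_4$ such that $m'\equiv x_1^2+x_2^2+x_3^2+x_4^2\pmod{27}$, $x_1^2+x_2^2\not\equiv1\pmod3$, $x_3^2+x_4^2\not\equiv1\pmod3$, $x_1^2+x_2^2\not\equiv0\pmod{27}$ and $x_3^2+x_4^2\not\equiv0\pmod{27}$. *)

From Stdlib Require Import ZArith.

(** A sum of two squares is 0, 1 or 2 modulo 3.  Taking [2 = 1^2 + 1^2] or
    [9 = 0^2 + 3^2] as the first pair leaves a residue [r = 2 (mod 3)] for the
    second pair, and [r = 1^2 + a^2 (mod 27)] because every residue [1 (mod 3)]
    is a square modulo 27.  Such a pair is never [1 (mod 3)] nor [0 (mod 27)].
    The remaining case [m = 0 (mod 9)] is settled by sums of the pairs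
    [9 = 0^2 + 3^2] and [18 = 3^2 + 3^2]. *)

From Stdlib Require Import ZArith Lia.
Open Scope Z_scope.

Definition good_sum (s : Z) : Prop := s mod 3 <> 1 /\ s mod 27 <> 0.

Definition decomposable (m : Z) : Prop :=
  exists x1 x2 x3 x4 : Z,
    m mod 27 = (x1^2 + x2^2 + x3^2 + x4^2) mod 27 /\
    good_sum (x1^2 + x2^2) /\ good_sum (x3^2 + x4^2).

Lemma mod_eq_divide (x y n d : Z) :
  (d | n) -> x mod n = y mod n -> x mod d = y mod d.
Proof.
  intros Hdn E.
  rewrite <- (Z.mod_mod_divide x n d), <- (Z.mod_mod_divide y n d), E by exact Hdn.
  reflexivity.
Qed.

Lemma mod3_of_mod27_eq (x y : Z) : x mod 27 = y mod 27 -> x mod 3 = y mod 3.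
Proof. apply mod_eq_divide; exists 9; reflexivity. Qed.

Lemma good_sum_of_mod3_2 (s : Z) : s mod 3 = 2 -> good_sum s.
Proof.
  intros Hs; split; [lia |].
  intros H27; apply mod3_of_mod27_eq with (y := 0) in H27.
  rewrite Hs in H27; discriminate H27.
Qed.

Lemma square_mod27_of_mod3_1 (r : Z) :
  r mod 3 = 1 -> exists a : Z, a^2 mod 27 = r mod 27.
Proof.
  intros Hr.
  assert (Hcases : r mod 27 = 1 \/ r mod 27 = 4 \/ r mod 27 = 7 \/
                   r mod 27 = 10 \/ r mod 27 = 13 \/ r mod 27 = 16 \/
                   r mod 27 = 19 \/ r mod 27 = 22 \/ r mod 27 = 25)
    by (Z.div_mod_to_equations; lia).
  destruct Hcases as [E|[E|[E|[E|[E|[E|[E|[E|E]]]]]]]]; rewrite E;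
    [exists 1 | exists 2 | exists 13 | exists 8 | exists 11
    | exists 4 | exists 10 | exists 7 | exists 5]; reflexivity.
Qed.

Lemma sum_two_squares_mod27_of_mod3_2 (r : Z) :
  r mod 3 = 2 -> exists a b : Z, (a^2 + b^2) mod 27 = r mod 27.
Proof.
  intros Hr.
  destruct (square_mod27_of_mod3_1 (r - 1)) as [b Hb];
    [Z.div_mod_to_equations; lia |].
  exists 1, b.
  rewrite Z.add_mod, Hb, <- Z.add_mod by lia.
  f_equal; ring.
Qed.

Lemma decomposable_of_first_pair (m x1 x2 : Z) :
  good_sum (x1^2 + x2^2) -> (m - (x1^2 + x2^2)) mod 3 = 2 -> decomposable m.
Proof.
  intros Hfirst Hrest.
  destruct (sum_two_squares_mod27_of_mod3_2 _ Hrest) as (x3 & x4 & E).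
  assert (Hsecond : good_sum (x3^2 + x4^2)).
  { apply good_sum_of_mod3_2; rewrite (mod3_of_mod27_eq _ _ E); exact Hrest. }
  exists x1, x2, x3, x4; split; [| split; assumption].
  rewrite <- Z.add_assoc, Z.add_mod, E, <- Z.add_mod by lia.
  f_equal; ring.
Qed.

Lemma decomposable_mod9_0 (m : Z) : m mod 9 = 0 -> decomposable m.
Proof.
  intros Hm.
  assert (Hcases : m mod 27 = 0 \/ m mod 27 = 9 \/ m mod 27 = 18)
    by (Z.div_mod_to_equations; lia).
  destruct Hcases as [E|[E|E]];
    [exists 0, 3, 3, 3 | exists 3, 3, 3, 3 | exists 0, 3, 0, 3];
    rewrite E; repeat split; try reflexivity; discriminate.
Qed.

Theorem lemma2 (m' : Z) :
  m' mod 9 <> 3 -> m' mod 9 <> 6 ->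
  exists x1 x2 x3 x4 : Z,
    m' mod 27 = (x1^2 + x2^2 + x3^2 + x4^2) mod 27 /\
    (x1^2 + x2^2) mod 3 <> 1 /\
    (x3^2 + x4^2) mod 3 <> 1 /\
    (x1^2 + x2^2) mod 27 <> 0 /\
    (x3^2 + x4^2) mod 27 <> 0.
Proof.
  intros H3 H6.
  assert (Hdec : decomposable m').
  { assert (Hcases : m' mod 9 = 0 \/ m' mod 3 = 1 \/ m' mod 3 = 2)
      by (Z.div_mod_to_equations; lia).
    destruct Hcases as [H0|[H1|H2]].
    - exact (decomposable_mod9_0 _ H0).
    - apply (decomposable_of_first_pair m' 1 1);
        [apply good_sum_of_mod3_2; reflexivity | Z.div_mod_to_equations; lia].
    - apply (decomposable_of_first_pair m' 0 3);
        [split; discriminate | Z.div_mod_to_equations; lia]. }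
  destruct Hdec as (x1 & x2 & x3 & x4 & E & [F1 F2] & [S1 S2]).
  exists x1, x2, x3, x4; tauto.
Qed.
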